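(* For every $A\in\Theta^\pm_\triangle(n)$, the set $\{B\in\Theta^\pm_\triangle(n):B\prec A\}$ is finite. Hence, for every $A'\in\widetilde\Theta_\triangle(n)$, the interval $(-\infty,A']=\{B\in\widetilde\Theta_\triangle(n):B\sqsubseteq A'\}$ is finite.
   Context: $n\ge2$. $\widetilde\Theta_\triangle(n)$ is the set of matrices $A=(a_{i,j})_{i,j\in\mathbb Z}$ with integer entries, $a_{i,j}\ge0$ for $i\ne j$, $a_{i+n,j+n}=a_{i,j}$ for all $i,j$, and such that each row and each column has finitely many nonzero entries; $\Theta^\pm_\triangle(n)$ is the set of such matrices with nonnegative entries and zero diagonal. $\mathrm{ro}(A)=(\sum_ja_{i,j})_{i\in\mathbb Z}$, $\mathrm{co}(A)=(\sum_ia_{i,j})_{j\in\mathbb Z}$. For $i\ne j$ let $\sigma_{i,j}(A)=\sum_{s\le i,t\ge j}a_{s,t}$ if $i<j$ and $\sigma_{i,j}(A)=\sum_{s\ge i,t\le j}a_{s,t}$ if $i>j$. $B\preccurlyeq A$ iff $\sigma_{i,j}(B)\le\sigma_{i,j}(A)$ for all $i\ne j$; $B\prec A$ iff $B\preccurlyeq A$ and $\sigma_{i,j}(B)<\sigma_{i,j}(A)$ for some $i\ne j$; $B\sqsubseteq A$ iff $B\preccurlyeq A$, $\mathrm{ro}(B)=\mathrm{ro}(A)$ and $\mathrm{co}(B)=\mathrm{co}(A)$. *)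

From mathcomp Require Import all_boot all_order all_algebra.
From Stdlib Require Import ClassicalEpsilon.
From Stdlib Require List.
Set Implicit Arguments. Unset Strict Implicit. Unset Printing Implicit Defensive.
Import Order.TTheory GRing.Theory Num.Theory.
Local Open Scope ring_scope.

Definition zmat := int -> int -> int.

(* The eventual value of an integer sequence (the value of an infinite sum
   computed along exhausting finite windows); 0 if it does not stabilize. *)
Definition ev_val (f : nat -> int) : int :=
  match excluded_middle_informative
          (exists v : int, exists N0 : nat, forall N : nat, (N0 <= N)%N -> f N = v) with
  | left h => proj1_sig (constructive_indefinite_description _ h)
  | right _ => 0
  end.

Definition ThetaTilde (n : nat) (A : zmat) : Prop :=
  (forall i j : int, i != j -> 0 <= A i j) /\
  (forall i j : int, A (i + n%:Z) (j + n%:Z) = A i j) /\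
  (forall i : int, exists s : seq int, forall j : int, A i j != 0 -> j \in s) /\
  (forall j : int, exists s : seq int, forall i : int, A i j != 0 -> i \in s).

Definition ThetaPM (n : nat) (A : zmat) : Prop :=
  ThetaTilde n A /\ (forall i j : int, 0 <= A i j) /\ (forall i : int, A i i = 0).

Definition ro (A : zmat) (i : int) : int :=
  ev_val (fun N => \sum_(k < (2 * N)%N) A i (k%:Z - N%:Z)).
Definition co (A : zmat) (j : int) : int :=
  ev_val (fun N => \sum_(k < (2 * N)%N) A (k%:Z - N%:Z) j).

Definition sigma (A : zmat) (i j : int) : int :=
  if i < j then
    ev_val (fun N => \sum_(k < N) \sum_(l < N) A (i - k%:Z) (j + l%:Z))
  else
    ev_val (fun N => \sum_(k < N) \sum_(l < N) A (i + k%:Z) (j - l%:Z)).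

Definition preceq (B A : zmat) : Prop :=
  forall i j : int, i != j -> sigma B i j <= sigma A i j.

Definition prec (B A : zmat) : Prop :=
  preceq B A /\ exists i j : int, i != j /\ sigma B i j < sigma A i j.

Definition sqsubseteq (B A : zmat) : Prop :=
  preceq B A /\ (forall i, ro B i = ro A i) /\ (forall j, co B j = co A j).

Definition finite_set (P : zmat -> Prop) : Prop :=
  exists l : list zmat, forall B, P B -> List.In B l.

(* Off the diagonal the entries of B are nonnegative and bounded by
   sigma_{i,j}(B) <= sigma_{i,j}(A). Periodicity and row-finiteness give A a
   finite bandwidth D, and sigma_{i,j}(A) vanishes outside the band
   |i - j| <= D; so the off-diagonal part of B vanishes outside that band, is
   determined by its entries on the n rows 0, ..., n-1, and these entries are
   bounded: only finitely many off-diagonal parts are possible. The diagonal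
   of B is then forced: it is zero in Theta^pm, and in the second case it is
   recovered from the row sums ro(B) = ro(A'). *)

From mathcomp Require Import all_boot all_order all_algebra zify.
From Stdlib Require Import ClassicalEpsilon FunctionalExtensionality.
From Stdlib Require List.
Set Implicit Arguments.
Unset Strict Implicit.
Unset Printing Implicit Defensive.
Import Order.TTheory GRing.Theory Num.Theory.
Local Open Scope ring_scope.

Lemma mem_In (T : eqType) (x : T) (s : seq T) : x \in s -> List.In x s.
Proof. by elim: s => //= y s IH; rewrite in_cons => /orP[/eqP->|/IH]; [left|right]. Qed.

Lemma finite_set_inj_code (T : eqType) (P : zmat -> Prop) (code : zmat -> T) (L : seq T) :
  (forall B, P B -> code B \in L) ->
  (forall B1 B2, P B1 -> P B2 -> code B1 = code B2 -> B1 = B2) -> finite_set P.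
Proof.
move=> codeL code_inj.
pose decode t := epsilon (inhabits ((fun _ _ => 0) : zmat)) (fun B => P B /\ code B = t).
exists (List.map decode L) => B PB.
have [Pdec code_dec] : P (decode (code B)) /\ code (decode (code B)) = code B.
  exact: (epsilon_spec _ (fun B' => P B' /\ code B' = code B) (ex_intro _ B (conj PB erefl))).
rewrite -(code_inj _ _ Pdec PB code_dec); exact/List.in_map/mem_In/codeL.
Qed.

Fixpoint seqs_over {T : Type} (r : seq T) (m : nat) : seq (seq T) :=
  if m is m'.+1 then [seq x :: s | x <- r, s <- seqs_over r m'] else [:: [::]].

Lemma mem_seqs_over (T : eqType) (r s : seq T) :
  {subset s <= r} -> s \in seqs_over r (size s).
Proof.
elim: s => [|x s IH] sr; first by rewrite inE.
apply: (allpairs_f (fun y t => y :: t)); first exact/sr/mem_head.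
by apply: IH => y ys; apply: sr; rewrite in_cons ys orbT.
Qed.

Lemma mem_Posz_iota (x : int) (M : nat) :
  0 <= x <= M%:Z -> x \in [seq k%:Z | k <- iota 0 M.+1].
Proof. by move=> xM; apply/mapP; exists (absz x); rewrite ?mem_iota; lia. Qed.

Lemma ev_val_eventually (f : nat -> int) (v : int) (N0 : nat) :
  (forall N, (N0 <= N)%N -> f N = v) -> ev_val f = v.
Proof.
move=> fv; rewrite /ev_val; case: excluded_middle_informative => [h|[]]; last by exists v, N0.
case: (constructive_indefinite_description _ h) => v' [N1 fv'] /=.
by rewrite -(fv' (maxn N0 N1)) ?leq_maxr // fv // leq_maxl.
Qed.

Lemma sum_ord_vanishing (g : nat -> int) (M N : nat) : (M <= N)%N ->
  (forall k, (M <= k)%N -> g k = 0) -> \sum_(k < N) g k = \sum_(k < M) g k.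
Proof.
move=> MN g0; rewrite -!(big_mkord xpredT) (big_cat_nat (leq0n M) MN) /=.
by rewrite [X in _ + X = _]big_nat_cond [X in _ + X = _]big1 ?addr0 // => k /andP[/andP[/g0]].
Qed.

Lemma dsum_ord_vanishing (F : nat -> nat -> int) (M N : nat) : (M <= N)%N ->
  (forall k l, (M <= k)%N || (M <= l)%N -> F k l = 0) ->
  \sum_(k < N) \sum_(l < N) F k l = \sum_(k < M) \sum_(l < M) F k l.
Proof.
move=> MN F0; rewrite (@sum_ord_vanishing (fun k => \sum_(l < N) F k l) M N MN).
  by apply: eq_bigr => k _; apply: sum_ord_vanishing => // l Ml; apply: F0; rewrite Ml orbT.
by move=> k Mk; rewrite big1 // => l _; apply: F0; rewrite Mk.
Qed.

Lemma dsum_ord_ge00 (F : nat -> nat -> int) (M : nat) : (forall k l, 0 <= F k l) ->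
  F 0%N 0%N <= \sum_(k < M.+1) \sum_(l < M.+1) F k l.
Proof.
move=> F_ge0; rewrite !big_ord_recl /= -addrA lerDl.
by rewrite addr_ge0 // !sumr_ge0 // => k _; rewrite sumr_ge0.
Qed.

Lemma ev_val_dsum_ge00 (F : nat -> nat -> int) (D : nat) :
  (forall k l, 0 <= F k l) -> (forall k l, (D < k)%N || (D < l)%N -> F k l = 0) ->
  F 0%N 0%N <= ev_val (fun N => \sum_(k < N) \sum_(l < N) F k l).
Proof.
move=> F_ge0 F_supp.
rewrite (@ev_val_eventually _ (\sum_(k < D.+1) \sum_(l < D.+1) F k l) D.+1).
  exact: dsum_ord_ge00.
by move=> N DN; apply: dsum_ord_vanishing.
Qed.

Lemma window_sum_grow (g : int -> int) (N : nat) : g (- N.+1%:Z) = 0 -> g N%:Z = 0 ->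
  \sum_(k < 2 * N.+1) g (k%:Z - N.+1%:Z) = \sum_(k < 2 * N) g (k%:Z - N%:Z).
Proof.
move=> g_left g_right.
rewrite -(big_mkord xpredT (fun k => g (k%:Z - N.+1%:Z))).
rewrite -(big_mkord xpredT (fun k => g (k%:Z - N%:Z))).
have -> : (2 * N.+1 = (2 * N).+2)%N by lia.
rewrite big_nat_recl // big_nat_recr //=.
have -> : 0%:Z - N.+1%:Z = - N.+1%:Z by lia.
have -> : (2 * N).+1%:Z - N.+1%:Z = N%:Z by lia.
rewrite g_left g_right add0r addr0; apply: eq_bigr => k _; congr g; lia.
Qed.

Lemma window_sum_stable (g : int -> int) (a N : nat) :
  (forall j, g j != 0 -> `|j| < a%:Z) -> (a <= N)%N ->
  \sum_(k < 2 * N) g (k%:Z - N%:Z) = \sum_(k < 2 * a) g (k%:Z - a%:Z).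
Proof.
move=> g_supp; elim: N => [|N IH] aN; first by have -> : a = 0%N by lia.
have [{}aN|-> //] : (a <= N)%N \/ a = N.+1 by lia.
by rewrite window_sum_grow ?IH //; apply/eqP; apply: contraT => /g_supp; lia.
Qed.

Lemma window_sum_point (g : int -> int) (i : int) (N : nat) :
  (forall j, j != i -> g j = 0) -> `|i| < N%:Z ->
  \sum_(k < 2 * N) g (k%:Z - N%:Z) = g i.
Proof.
move=> g_point iN; have iK : (absz (i + N%:Z)%R < 2 * N)%N by lia.
rewrite (bigD1 (Ordinal iK)) //= big1 ?addr0.
  by have -> : (absz (i + N%:Z)%R)%:Z - N%:Z = i by lia.
move=> k ki; apply: g_point; apply: contra_neq ki => e.
by apply: val_inj => /=; lia.
Qed.

Lemma ro_window (B : zmat) (i : int) (a N : nat) :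
  (forall j, B i j != 0 -> `|j| < a%:Z) -> (a <= N)%N ->
  ro B i = \sum_(k < 2 * N) B i (k%:Z - N%:Z).
Proof.
move=> row_supp aN; apply: (@ev_val_eventually _ _ N) => N' NN'.
by rewrite !(@window_sum_stable _ _ _ row_supp) // (leq_trans aN).
Qed.

Lemma row_support_bound (B : zmat) (i : int) (s : seq int) :
  (forall j, B i j != 0 -> j \in s) ->
  forall j, B i j != 0 -> `|j| < (\max_(x <- s) absz x).+1%:Z.
Proof.
move=> row_supp j /row_supp js.
have : (absz j <= \max_(x <- s) absz x)%N by exact: leq_bigmax_seq.
lia.
Qed.

Lemma diag_eq_of_ro (B1 B2 : zmat) (i : int) (s1 s2 : seq int) :
  (forall j, B1 i j != 0 -> j \in s1) -> (forall j, B2 i j != 0 -> j \in s2) ->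
  (forall j, j != i -> B1 i j = B2 i j) -> ro B1 i = ro B2 i -> B1 i i = B2 i i.
Proof.
move=> /row_support_bound supp1 /row_support_bound supp2 offdiag_eq ro_eq.
set a1 := (\max_(x <- s1) _).+1 in supp1; set a2 := (\max_(x <- s2) _).+1 in supp2.
set N := maxn (maxn a1 a2) (absz i).+1.
move: ro_eq; rewrite (@ro_window _ _ _ N supp1) ?(@ro_window _ _ _ N supp2); try lia.
move/eqP; rewrite -subr_eq0 -sumrB.
rewrite (@window_sum_point (fun j => B1 i j - B2 i j) i) ?subr_eq0 => [/eqP //||]; last by lia.
by move=> j ji; rewrite offdiag_eq ?subrr.
Qed.

Definition in_band (D : nat) (i j : int) : bool := `|i - j| <= D%:Z.

Lemma sigma_out_band (A : zmat) (D : nat) :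
  (forall i j, A i j != 0 -> in_band D i j) ->
  forall i j, ~~ in_band D i j -> sigma A i j = 0.
Proof.
rewrite /in_band => bandA i j out; rewrite /sigma.
case: ifP => ij; apply: (@ev_val_eventually _ _ 0) => N _;
  rewrite big1 // => k _; rewrite big1 // => l _;
  apply/eqP; apply: contraT => /bandA; move: ij out; lia.
Qed.

Definition offdiag (B : zmat) : zmat := fun i j => if i == j then 0 else B i j.

Section Periodic.

Variable n : nat.
Hypothesis n_gt0 : (0 < n)%N.

Lemma ThetaTilde_shift (A : zmat) : ThetaTilde n A ->
  forall i j q : int, A (i + q * n%:Z) (j + q * n%:Z) = A i j.
Proof.
move=> [_ [A_per _]] i j q.
have shift_nat (k : nat) i' j' : A (i' + (k * n)%:Z) (j' + (k * n)%:Z) = A i' j'.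
  elim: k => [|k IH]; first by rewrite mul0n !addr0.
  have e x : x + (k.+1 * n)%:Z = (x + (k * n)%:Z) + n%:Z by lia.
  by rewrite !e A_per.
case: q => k; first by rewrite -PoszM shift_nat.
have e x : x = (x + Negz k * n%:Z) + (k.+1 * n)%:Z by lia.
by rewrite [in RHS](e i) [in RHS](e j) shift_nat.
Qed.

Lemma ThetaTilde_reduce (A : zmat) : ThetaTilde n A -> forall i j : int,
  A i j = A (i %% n)%Z (j - (i %/ n)%Z * n%:Z).
Proof.
move=> tA i j; rewrite -(ThetaTilde_shift tA (i %% n)%Z _ (i %/ n)%Z) subrK.
by congr A; lia.
Qed.

Lemma offdiag_reduce (A : zmat) : ThetaTilde n A -> forall i j : int,
  offdiag A i j = offdiag A (i %% n)%Z (j - (i %/ n)%Z * n%:Z).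
Proof.
move=> tA i j; rewrite /offdiag -(ThetaTilde_reduce tA).
by congr (if _ then _ else _); apply/eqP/eqP; lia.
Qed.

Lemma ThetaTilde_band (A : zmat) : ThetaTilde n A ->
  exists D : nat, forall i j, A i j != 0 -> in_band D i j.
Proof.
move=> tA; rewrite /in_band.
have rows_band m : exists D : nat, forall r j : int,
    0 <= r < m%:Z -> A r j != 0 -> `|r - j| <= D%:Z.
  elim: m => [|m [D bandD]]; first by exists 0%N => r j; lia.
  have [s row_m] := tA.2.2.1 m%:Z.
  exists (maxn D (\max_(x <- s) absz (x - m%:Z))) => r j rm Arj.
  have [r_lt|r_eq] : r < m%:Z \/ r = m%:Z by lia.
    have r_rng : 0 <= r < m%:Z by lia.
    by have := bandD r j r_rng Arj; lia.
  rewrite r_eq in Arj *.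
  have : (absz (j - m%:Z) <= \max_(x <- s) absz (x - m%:Z))%N.
    by apply: leq_bigmax_seq; first exact: row_m.
  lia.
have [D bandD] := rows_band n; exists D => i j.
rewrite (ThetaTilde_reduce tA) => /bandD; lia.
Qed.

Lemma entry_le_sigma (B : zmat) : ThetaTilde n B ->
  forall i j, i != j -> B i j <= sigma B i j.
Proof.
move=> tB i j ij; have [D bandB] := ThetaTilde_band tB; have B_ge0 := tB.1.
have vanish i' j' : D%:Z < `|i' - j'| -> B i' j' = 0.
  by move=> out; apply/eqP; apply: contraT => /bandB; rewrite /in_band; lia.
rewrite /sigma; case: ifP => ij_lt.
  have := @ev_val_dsum_ge00 (fun k l => B (i - k%:Z) (j + l%:Z)) D.
  rewrite subr0 addr0; apply=> k l; first by apply: B_ge0; lia.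
  by move=> kl; apply: vanish; move: kl; lia.
have := @ev_val_dsum_ge00 (fun k l => B (i + k%:Z) (j - l%:Z)) D.
rewrite subr0 addr0; apply=> k l; first by apply: B_ge0; lia.
by move=> kl; apply: vanish; move: kl; lia.
Qed.

Lemma preceq_offdiag_bound (A B : zmat) : ThetaTilde n B -> preceq B A ->
  forall i j, 0 <= offdiag B i j <= `|sigma A i j|.
Proof.
move=> tB BA i j; rewrite /offdiag; case: eqVneq => [//|ij].
have := tB.1 i j ij; have := entry_le_sigma tB ij; have := BA i j ij; lia.
Qed.

Definition band_window (D : nat) : seq (int * int) :=
  [seq (r%:Z, r%:Z + d%:Z - D%:Z) | r <- iota 0 n, d <- iota 0 (2 * D).+1].

Lemma band_window_reduce (D : nat) (i j : int) : in_band D i j ->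
  ((i %% n)%Z, j - (i %/ n)%Z * n%:Z) \in band_window D.
Proof.
rewrite /in_band => ij.
have -> : ((i %% n)%Z, j - (i %/ n)%Z * n%:Z) =
    ((absz (i %% n)%Z)%:Z, (absz (i %% n)%Z)%:Z
       + (absz (j - (i %/ n)%Z * n%:Z - (i %% n)%Z + D%:Z))%:Z - D%:Z).
  by congr pair; lia.
by apply: (allpairs_f (fun r d : nat => (r%:Z, r%:Z + d%:Z - D%:Z))); rewrite mem_iota; lia.
Qed.

Lemma finite_preceq_offdiag_inj (A : zmat) (P : zmat -> Prop) : ThetaTilde n A ->
  (forall B, P B -> ThetaTilde n B /\ preceq B A) ->
  (forall B1 B2, P B1 -> P B2 -> offdiag B1 = offdiag B2 -> B1 = B2) -> finite_set P.
Proof.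
move=> tA P_below offdiag_inj; have [D bandA] := ThetaTilde_band tA.
pose M := \max_(p <- band_window D) absz (sigma A p.1 p.2).
pose code B := [seq offdiag B p.1 p.2 | p <- band_window D].
apply: (@finite_set_inj_code _ P code
          (seqs_over [seq k%:Z | k <- iota 0 M.+1] (size (band_window D)))).
  move=> B /P_below[tB BA]; rewrite -(size_map (fun p => offdiag B p.1 p.2)).
  apply: mem_seqs_over => _ /mapP[[i j] ij_win ->] /=.
  have M_bound : (absz (sigma A i j) <= M)%N.
    exact: (@leq_bigmax_seq _ _ xpredT (fun p => absz (sigma A p.1 p.2)) (i, j)).
  have B_bound := preceq_offdiag_bound tB BA i j.
  by apply: mem_Posz_iota; lia.
move=> B1 B2 /[dup] P1 /P_below[tB1 B1A] /[dup] P2 /P_below[tB2 B2A] code_eq.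
apply: offdiag_inj => //; apply: functional_extensionality => i.
apply: functional_extensionality => j.
have [inb|outb] := boolP (in_band D i j).
  rewrite (offdiag_reduce tB1) (offdiag_reduce tB2).
  exact: (eq_in_map _ _ _).2 code_eq _ (band_window_reduce inb).
have sigma0 := sigma_out_band bandA outb.
have := preceq_offdiag_bound tB1 B1A i j; have := preceq_offdiag_bound tB2 B2A i j.
rewrite sigma0; lia.
Qed.

End Periodic.

Lemma offdiag_diag_inj (B1 B2 : zmat) :
  offdiag B1 = offdiag B2 -> (forall i, B1 i i = B2 i i) -> B1 = B2.
Proof.
move=> off_eq diag_eq; apply: functional_extensionality => i.
apply: functional_extensionality => j; have := congr1 (fun B => B i j) off_eq.
by rewrite /offdiag; case: eqVneq => [<-|].
Qed.

Theorem lemma7p5 (n : nat) (hn : (2 <= n)%N) :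
  (forall A : zmat, ThetaPM n A ->
     finite_set (fun B => ThetaPM n B /\ prec B A)) /\
  (forall A' : zmat, ThetaTilde n A' ->
     finite_set (fun B => ThetaTilde n B /\ sqsubseteq B A')).
Proof.
have n_gt0 : (0 < n)%N by lia.
split=> [A [tA _] | A tA].
  apply: (finite_preceq_offdiag_inj n_gt0 tA) => [B [[tB _] [BA _]] //|].
  move=> B1 B2 [[_ [_ zero1]] _] [[_ [_ zero2]] _] off_eq.
  by apply: offdiag_diag_inj => // i; rewrite zero1 zero2.
apply: (finite_preceq_offdiag_inj n_gt0 tA) => [B [tB [BA _]] //|].
move=> B1 B2 [tB1 [_ [ro1 _]]] [tB2 [_ [ro2 _]]] off_eq.
apply: offdiag_diag_inj => // i.
have [[s1 row1] [s2 row2]] := (tB1.2.2.1 i, tB2.2.2.1 i).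
apply: (diag_eq_of_ro row1 row2); last by rewrite ro1 ro2.
by move=> j ji; have := congr1 (fun B => B i j) off_eq; rewrite /offdiag eq_sym (negPf ji).
Qed.
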